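(* Let $k$ be a Noetherian commutative ring, $K$ a flat affine group scheme over $k$, and $\{V_{\mathcal O}\}_{\mathcal O}$ a set of $K$-modules such that for every $K$-module $Q$ that is finitely generated as a $k$-module, $\operatorname{Hom}_K(Q,V_{\mathcal O})=0$ for all but finitely many indices $\mathcal O$. Then the direct sum $\bigoplus_{\mathcal O}V_{\mathcal O}$, with the inclusions composed with the canonical maps, is also a product of $\{V_{\mathcal O}\}$ in the category of $K$-modules (i.e. the natural map $\bigoplus_{\mathcal O} V_{\mathcal O}\to\prod^{K\text{-mod}}_{\mathcal O}V_{\mathcal O}$ is an isomorphism).
   Context: A $K$-module for $K=\operatorname{Spec}H$ is an $H$-comodule; $\operatorname{Hom}_K$ denotes comodule homomorphisms. The category of $K$-modules has all small products (which in general differ from products of underlying $k$-modules). *)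

(* Comodules over a (flat, commutative) Hopf algebra H over a
   commutative ring k, i.e. modules over the affine group scheme K = Spec H.
   Tensor products over k are not in the library; they are encoded below by
   formal finite sums (sequences of pairs/triples) modulo the relation
   generated by multilinearity and k-balancedness. *)
From HB Require Import structures.
From mathcomp Require Import all_boot all_order all_algebra.
From mathcomp Require Import boolp.
From Stdlib Require List.

Set Implicit Arguments.
Unset Strict Implicit.
Unset Printing Implicit Defensive.

Import GRing.Theory.
Local Open Scope ring_scope.

Section Tensor.
Variable k : comNzRingType.

(* s ~ t in U (x)_k V, where s = [:: (u_1,v_1); ...] stands for sum u_j (x) v_j.
   The quotient of the free commutative monoid on U * V by these relations is
   (the additive group of) the tensor product U (x)_k V. *)
Inductive teq2 (U V : lmodType k) : seq (U * V)%type -> seq (U * V)%type -> Prop :=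
| t2_refl s : teq2 s s
| t2_sym s t : teq2 s t -> teq2 t s
| t2_trans s t u : teq2 s t -> teq2 t u -> teq2 s u
| t2_cat s1 t1 s2 t2 : teq2 s1 t1 -> teq2 s2 t2 -> teq2 (s1 ++ s2) (t1 ++ t2)
| t2_swap a b : teq2 [:: a; b] [:: b; a]
| t2_zero v : teq2 [:: (0, v)] [::]
| t2_addl u u' v : teq2 [:: (u + u', v)] [:: (u, v); (u', v)]
| t2_addr u v v' : teq2 [:: (u, v + v')] [:: (u, v); (u, v')]
| t2_bal c u v : teq2 [:: (c *: u, v)] [:: (u, c *: v)].

Inductive teq3 (U V W : lmodType k) :
  seq (U * V * W)%type -> seq (U * V * W)%type -> Prop :=
| t3_refl s : teq3 s s
| t3_sym s t : teq3 s t -> teq3 t s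
| t3_trans s t u : teq3 s t -> teq3 t u -> teq3 s u
| t3_cat s1 t1 s2 t2 : teq3 s1 t1 -> teq3 s2 t2 -> teq3 (s1 ++ s2) (t1 ++ t2)
| t3_swap a b : teq3 [:: a; b] [:: b; a]
| t3_zero v w : teq3 [:: (0, v, w)] [::]
| t3_add1 u u' v w : teq3 [:: (u + u', v, w)] [:: (u, v, w); (u', v, w)]
| t3_add2 u v v' w : teq3 [:: (u, v + v', w)] [:: (u, v, w); (u, v', w)]
| t3_add3 u v w w' : teq3 [:: (u, v, w + w')] [:: (u, v, w); (u, v, w')]
| t3_bal12 c u v w : teq3 [:: (c *: u, v, w)] [:: (u, c *: v, w)]
| t3_bal23 c u v w : teq3 [:: (u, c *: v, w)] [:: (u, v, c *: w)].

Definition tmap2 (U V U' V' : Type) (f : U -> U') (g : V -> V')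
  (s : seq (U * V)%type) : seq (U' * V')%type := [seq (f p.1, g p.2) | p <- s].

Definition klinear (U V : lmodType k) (f : U -> V) : Prop :=
  forall (c : k) (x y : U), f (c *: x + y) = c *: f x + f y.

(* a map U -> U (x) V (given on representatives) is k-linear *)
Definition tlinear (U U' V : lmodType k) (r : U -> seq (U' * V)%type) : Prop :=
  forall (c : k) (x y : U),
    teq2 (r (c *: x + y)) (tmap2 ( *:%R c) id (r x) ++ r y).

End Tensor.

Section Hopf.
Variables (k : comNzRingType) (H : comAlgType k).

Definition tmul (s t : seq (H * H)%type) : seq (H * H)%type :=
  [seq (a.1 * b.1, a.2 * b.2) | a <- s, b <- t].

Record hopf := Hopf {
  comul : H -> seq (H * H)%type;
  counit : H -> k;
  antipode : H -> H;
  comul_lin : tlinear comul;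
  comul_mul : forall x y, teq2 (comul (x * y)) (tmul (comul x) (comul y));
  comul_one : teq2 (comul 1) [:: (1, 1)];
  comul_coassoc : forall x,
    teq3 [seq (q.1, q.2, p.2) | p <- comul x, q <- comul p.1]
         [seq (p.1, q.1, q.2) | p <- comul x, q <- comul p.2];
  counit_lin : forall c x y, counit (c *: x + y) = c * counit x + counit y;
  counit_mul : forall x y, counit (x * y) = counit x * counit y;
  counit_one : counit 1 = 1;
  counitl : forall x, \sum_(p <- comul x) counit p.1 *: p.2 = x;
  counitr : forall x, \sum_(p <- comul x) counit p.2 *: p.1 = x;
  antipode_lin : klinear antipode;
  antipodel : forall x, \sum_(p <- comul x) antipode p.1 * p.2 = counit x *: 1;
  antipoder : forall x, \sum_(p <- comul x) p.1 * antipode p.2 = counit x *: 1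
}.

(* H is flat over k: - (x)_k H preserves injections *)
Definition flat_over : Prop :=
  forall (M N : lmodType k) (f : M -> N), klinear f -> injective f ->
  forall s t : seq (M * H)%type,
    teq2 (tmap2 f id s) (tmap2 f id t) -> teq2 s t.

Variable K : hopf.

Definition is_coaction (V : lmodType k) (r : V -> seq (V * H)%type) : Prop :=
  [/\ tlinear r,
      (forall v, teq3 [seq (q.1, q.2, p.2) | p <- r v, q <- r p.1]
                      [seq (p.1, q.1, q.2) | p <- r v, q <- comul K p.2]) &
      (forall v, \sum_(p <- r v) counit K p.2 *: p.1 = v)].

Record comod := Comod {
  cm_car :> lmodType k;
  cm_co : cm_car -> seq (cm_car * H)%type;
  cm_coP : is_coaction cm_co
}.

Definition is_hom (V W : lmodType k) (rV : V -> seq (V * H)%type)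
  (rW : W -> seq (W * H)%type) (f : V -> W) : Prop :=
  klinear f /\ forall v, teq2 (tmap2 f id (rV v)) (rW (f v)).

Definition Khom (V W : comod) (f : V -> W) := is_hom (@cm_co V) (@cm_co W) f.

Definition Hom_zero (Q V : comod) : Prop :=
  forall f : Q -> V, Khom f -> forall q, f q = 0.

Definition fin_gen (M : lmodType k) : Prop :=
  exists s : seq M, forall m : M,
    exists c : 'I_(size s) -> k, m = \sum_(i < size s) c i *: s`_i.

End Hopf.

Definition is_ideal (k : comNzRingType) (J : k -> Prop) : Prop :=
  [/\ J 0, (forall x y, J x -> J y -> J (x + y)) &
      (forall a x, J x -> J (a * x))].

Definition noetherian (k : comNzRingType) : Prop :=
  forall J : k -> Prop, is_ideal J ->
  exists s : seq k, forall x, J x <->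
    exists c : 'I_(size s) -> k, x = \sum_(i < size s) c i * s`_i.

Section DirectSum.
Variables (k : comNzRingType) (I : Type) (V : I -> lmodType k).

Definition finsupp (f : forall i, V i) : Prop :=
  exists s : seq I, forall i, ~ List.In i s -> f i = 0.

Definition dsum := {f : forall i, V i | finsupp f}.

HB.instance Definition _ := gen_eqMixin dsum.
HB.instance Definition _ := gen_choiceMixin dsum.

Lemma dsum_ext (f g : dsum) : (forall i, sval f i = sval g i) -> f = g.
Proof.
case: f g => [f fP] [g gP] /= E.
have efg : f = g by apply: functional_extensionality_dep.
subst g; congr exist; exact: Prop_irrelevance.
Qed.

Lemma finsupp0 : finsupp (fun i => 0).
Proof. by exists [::]. Qed.

Lemma finsuppN (f : dsum) : finsupp (fun i => - sval f i).
Proof. case: f => f [s Hs]; exists s => i /Hs /= ->; exact: oppr0. Qed.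

Lemma finsuppD (f g : dsum) : finsupp (fun i => sval f i + sval g i).
Proof.
case: f g => f [s Hs] [g [t Ht]]; exists (s ++ t) => i /= Hi.
rewrite Hs ?Ht ?addr0 // => H; apply: Hi; apply: List.in_or_app; tauto.
Qed.

Lemma finsuppZ (c : k) (f : dsum) : finsupp (fun i => c *: sval f i).
Proof. case: f => f [s Hs]; exists s => i /Hs /= ->; exact: scaler0. Qed.

Definition dsum0 : dsum := exist _ _ finsupp0.
Definition dsumN (f : dsum) : dsum := exist _ _ (finsuppN f).
Definition dsumD (f g : dsum) : dsum := exist _ _ (finsuppD f g).
Definition dsumZ (c : k) (f : dsum) : dsum := exist _ _ (finsuppZ c f).

Lemma dsumA : associative dsumD.
Proof. by move=> f g h; apply: dsum_ext => i /=; rewrite addrA. Qed.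
Lemma dsumC : commutative dsumD.
Proof. by move=> f g; apply: dsum_ext => i /=; rewrite addrC. Qed.
Lemma dsum0l : left_id dsum0 dsumD.
Proof. by move=> f; apply: dsum_ext => i /=; rewrite add0r. Qed.
Lemma dsumNl : left_inverse dsum0 dsumN dsumD.
Proof. by move=> f; apply: dsum_ext => i /=; rewrite addNr. Qed.

HB.instance Definition _ := GRing.isZmodule.Build dsum dsumA dsumC dsum0l dsumNl.

Lemma dsumZA a b (f : dsum) : dsumZ a (dsumZ b f) = dsumZ (a * b) f.
Proof. by apply: dsum_ext => i /=; rewrite scalerA. Qed.
Lemma dsumZ1 : left_id 1 dsumZ.
Proof. by move=> f; apply: dsum_ext => i /=; rewrite scale1r. Qed.
Lemma dsumZDr : right_distributive dsumZ +%R.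
Proof. by move=> a f g; apply: dsum_ext => i /=; rewrite scalerDr. Qed.
Lemma dsumZDl (f : dsum) : {morph dsumZ^~ f : a b / a + b}.
Proof. by move=> a b; apply: dsum_ext => i /=; rewrite scalerDl. Qed.

HB.instance Definition _ :=
  GRing.Zmodule_isLmodule.Build k dsum dsumZA dsumZ1 dsumZDr dsumZDl.

Definition dproj (i : I) (f : dsum) : V i := sval f i.

Definition dinj_fun (i : I) (v : V i) : forall j, V j :=
  fun j => match pselect (i = j) with
           | left e => eq_rect i V v j e
           | right _ => 0
           end.

Lemma finsupp_inj (i : I) (v : V i) : finsupp (dinj_fun v).
Proof.
exists [:: i] => j Hj; rewrite /dinj_fun; case: pselect => // e.
by exfalso; apply: Hj; left.
Qed.

Definition dinj (i : I) (v : V i) : dsum := exist _ _ (finsupp_inj v).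

Definition Idec (i j : I) : {i = j} + {i <> j} := pselect (i = j).

Definition dsupp (f : dsum) : seq I :=
  List.nodup Idec (sval (cid (svalP f))).

End DirectSum.

Arguments dproj {k I V} i f.

Definition dsum_co (k : comNzRingType) (H : comAlgType k) (K : hopf H)
  (I : Type) (V : I -> comod K) (f : dsum (fun i => cm_car (V i))) :
  seq (dsum (fun i => cm_car (V i)) * H)%type :=
  flatten [seq tmap2 (@dinj k I (fun i => cm_car (V i)) i) id
                     (cm_co (dproj i f)) | i <- dsupp f].

Definition is_Kproduct (k : comNzRingType) (H : comAlgType k) (K : hopf H)
  (I : Type) (V : I -> comod K) (P : lmodType k) (rP : P -> seq (P * H)%type)
  (p : forall i, P -> V i) : Prop :=
  [/\ is_coaction K rP,
      (forall i, is_hom rP (@cm_co _ _ K (V i)) (p i)) &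
      (forall (W : comod K) (f : forall i, W -> V i),
         (forall i, Khom (f i)) ->
         exists g : W -> P,
           [/\ is_hom (@cm_co _ _ K W) rP g,
               (forall i w, p i (g w) = f i w) &
               (forall g' : W -> P, is_hom (@cm_co _ _ K W) rP g' ->
                  (forall i w, p i (g' w) = f i w) -> forall w, g' w = g w)])].

(* Over a Noetherian ring k and a flat Hopf algebra H, every K-module W is
   locally finite: an element w lies in a K-submodule of W that is finitely
   generated over k.  Indeed, let N be the k-span of the left tensor factors of
   rho(w) (so w \in N by the counit axiom) and P the set of v \in N with
   rho(v) \in N (x) H.  P is the kernel of N -> (W (x) H)/(N (x) H),
   v |-> rho(v), and coassociativity, flatness of H and right exactness of
   - (x) H show that rho(P) \subset P (x) H; P is finitely generated because
   k is Noetherian.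
   Given K-module maps f_i : W -> V_i, the value f_i(w) is thus the image of a
   map Q -> V_i out of a finitely generated Q, which vanishes for all but
   finitely many i by hypothesis.  Hence w |-> (f_i(w))_i lands in the direct
   sum, and it is the unique factorisation through the projections. *)

From HB Require Import structures.
From mathcomp Require Import all_boot all_order all_algebra.
From mathcomp Require Import boolp.
From Stdlib Require List.

Set Implicit Arguments.
Unset Strict Implicit.
Unset Printing Implicit Defensive.

Import GRing.Theory.
Local Open Scope ring_scope.

Record comm_congruence (T : Type) (R : seq T -> seq T -> Prop) : Prop :=
  CommCongruence {
    cong_refl : forall s, R s s;
    cong_sym : forall s t, R s t -> R t s;
    cong_trans : forall s t u, R s t -> R t u -> R s u;
    cong_cat : forall s1 t1 s2 t2, R s1 t1 -> R s2 t2 -> R (s1 ++ s2) (t1 ++ t2);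
    cong_swap : forall a b, R [:: a; b] [:: b; a]
  }.

Section CommCongruence.
Variables (T : Type) (R : seq T -> seq T -> Prop).
Hypothesis hR : comm_congruence R.

Lemma cong_catl s t u : R s t -> R (u ++ s) (u ++ t).
Proof. by move=> h; exact: (cong_cat hR (cong_refl hR u) h). Qed.

Lemma cong_catr s t u : R s t -> R (s ++ u) (t ++ u).
Proof. by move=> h; exact: (cong_cat hR h (cong_refl hR u)). Qed.

Lemma cong_catC s t : R (s ++ t) (t ++ s).
Proof.
have rot1 a u : R (a :: u) (u ++ [:: a]).
  elim: u => [|b u IH] /=; first exact: cong_refl.
  have h1 := cong_catr u (cong_swap hR a b).
  have h2 := cong_catl [:: b] IH.
  exact: (cong_trans hR h1 h2).
elim: s => [|a s IH] /=; first by rewrite cats0; apply: cong_refl.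
apply: (cong_trans hR (cong_catl [:: a] IH)).
rewrite -cat1s catA; apply: (cong_trans hR (cong_catr s (rot1 a t))).
by rewrite -catA; apply: cong_refl.
Qed.

Lemma cong_catACA a b c d : R ((a ++ b) ++ (c ++ d)) ((a ++ c) ++ (b ++ d)).
Proof. by rewrite -!catA; apply: cong_catl; rewrite !catA; apply/cong_catr/cong_catC. Qed.

Lemma cong_flatten (I : Type) (F G : I -> seq T) (s : seq I) :
  (forall i, List.In i s -> R (F i) (G i)) ->
  R (flatten (map F s)) (flatten (map G s)).
Proof.
elim: s => [|a s IH] h /=; first exact: cong_refl.
exact: (cong_cat hR (h a (or_introl erefl)) (IH (fun i hi => h i (or_intror hi)))).
Qed.

Lemma cong_flatten_nil (I : Type) (F : I -> seq T) (s : seq I) :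
  (forall i, List.In i s -> R (F i) [::]) -> R (flatten (map F s)) [::].
Proof.
move=> h; apply: (cong_trans hR (cong_flatten h)).
by elim: s {h} => [|a s IH] //=; apply: cong_refl.
Qed.

Lemma cong_flattenD (I : Type) (F G : I -> seq T) (s : seq I) :
  R (flatten (map (fun i => F i ++ G i) s)) (flatten (map F s) ++ flatten (map G s)).
Proof.
elim: s => [|a s IH] /=; first exact: cong_refl.
exact: (cong_trans hR (cong_catl _ IH) (cong_catACA _ _ _ _)).
Qed.

Lemma cong_map (I : Type) (F G : I -> T) (s : seq I) :
  (forall i, R [:: F i] [:: G i]) -> R (map F s) (map G s).
Proof.
move=> h; elim: s => [|a s IH] /=; first exact: cong_refl.
exact: (cong_cat hR (h a) IH).
Qed.

End CommCongruence.

Section Tensor.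
Variable k : comNzRingType.

Lemma klinear0 (U V : lmodType k) (f : U -> V) : klinear f -> f 0 = 0.
Proof.
move=> hf; have := hf 1 0 0; rewrite !scale1r addr0 => e.
by apply: (addrI (f 0)); rewrite addr0 -e.
Qed.

Lemma klinearD (U V : lmodType k) (f : U -> V) : klinear f -> {morph f : x y / x + y}.
Proof. by move=> hf x y; have := hf 1 x y; rewrite !scale1r. Qed.

Lemma klinearZ (U V : lmodType k) (f : U -> V) c : klinear f -> {morph f : x / c *: x}.
Proof. by move=> hf x; rewrite -[c *: x]addr0 hf klinear0 // addr0. Qed.

Lemma klinearN (U V : lmodType k) (f : U -> V) : klinear f -> {morph f : x / - x}.
Proof. by move=> hf x; rewrite -scaleN1r klinearZ // scaleN1r. Qed.

Lemma klinear_sum (U V : lmodType k) (f : U -> V) (I : Type) (s : seq I) (F : I -> U) :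
  klinear f -> f (\sum_(i <- s) F i) = \sum_(i <- s) f (F i).
Proof.
move=> hf; elim: s => [|a s IH]; first by rewrite !big_nil klinear0.
by rewrite !big_cons klinearD // IH.
Qed.

Lemma klinear_comp (U V W : lmodType k) (f : U -> V) (g : V -> W) :
  klinear f -> klinear g -> klinear (g \o f).
Proof. by move=> hf hg c x y; rewrite /= hf hg. Qed.

Lemma klinear_scale (U : lmodType k) (c : k) : klinear (fun x : U => c *: x).
Proof. by move=> a x y; rewrite scalerDr !scalerA mulrC. Qed.

Lemma tmap2_cat (A B A' B' : Type) (f : A -> A') (g : B -> B') s t :
  tmap2 f g (s ++ t) = tmap2 f g s ++ tmap2 f g t.
Proof. exact: map_cat. Qed.

Lemma tmap2_comp (A B A' B' A'' : Type) (f : A -> A') (f' : A' -> A'') (g : B -> B') s :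
  tmap2 f' id (tmap2 f g s) = tmap2 (f' \o f) g s.
Proof. by rewrite /tmap2 -map_comp. Qed.

Lemma tmap2_id (A B : Type) (s : seq (A * B)) : tmap2 id id s = s.
Proof. by elim: s => [|[a b] s /= ->]. Qed.

Lemma eq_tmap2 (A B A' B' : Type) (f f' : A -> A') (g : B -> B') s :
  f =1 f' -> tmap2 f g s = tmap2 f' g s.
Proof. by move=> e; apply: eq_map => p; rewrite e. Qed.

Lemma teq2_cong (U V : lmodType k) : comm_congruence (@teq2 k U V).
Proof. by constructor; [exact: t2_refl | exact: t2_sym | exact: t2_trans | exact: t2_cat | exact: t2_swap]. Qed.

Lemma teq3_cong (U V W : lmodType k) : comm_congruence (@teq3 k U V W).
Proof. by constructor; [exact: t3_refl | exact: t3_sym | exact: t3_trans | exact: t3_cat | exact: t3_swap]. Qed.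

Section Teq2.
Variables U V : lmodType k.
Notation R := (@teq2 k U V).

Lemma teq2_neg s : R (tmap2 (fun x => - x) id s ++ s) [::].
Proof.
elim: s => [|[u v] s IH] /=; first exact: t2_refl.
apply: t2_trans (_ : R ([:: (- u, v); (u, v)] ++ (tmap2 (fun x => - x) id s ++ s)) _).
  apply: (cong_catl (teq2_cong U V) [:: _]); rewrite -cat1s catA -[in X in R _ X]cat1s catA.
  exact/(cong_catr (teq2_cong U V))/(cong_catC (teq2_cong U V)).
rewrite -[[::]]/([::] ++ [::]); apply: (t2_cat _ IH); apply: t2_trans (t2_sym (t2_addl _ _ _)) _.
by rewrite addNr; apply: t2_zero.
Qed.

Lemma teq2_scaleDl (a b : k) s :
  R (tmap2 ( *:%R (a + b)) id s) (tmap2 ( *:%R a) id s ++ tmap2 ( *:%R b) id s).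
Proof.
elim: s => [|[u v] s IH] /=; first exact: t2_refl.
rewrite scalerDl; apply: t2_trans (t2_cat (t2_addl _ _ _) IH) _.
exact: (cong_catACA (teq2_cong U V) [:: _] [:: _]).
Qed.

Lemma big_teq2 (M : nmodType) (phi : U * V -> M) :
  (forall v, phi (0, v) = 0) ->
  (forall u u' v, phi (u + u', v) = phi (u, v) + phi (u', v)) ->
  (forall u v v', phi (u, v + v') = phi (u, v) + phi (u, v')) ->
  (forall c u v, phi (c *: u, v) = phi (u, c *: v)) ->
  forall s t, R s t -> \sum_(p <- s) phi p = \sum_(p <- t) phi p.
Proof.
move=> h0 hl hr hb s t; elim => {s t} //.
- by move=> s t u _ -> _ ->.
- by move=> s1 t1 s2 t2 _ e1 _ e2; rewrite !big_cat e1 e2.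
- by move=> a b; rewrite !big_cons !big_nil !addr0 addrC.
- by move=> v; rewrite big_cons big_nil addr0 h0.
- by move=> u u' v; rewrite !big_cons !big_nil !addr0 hl.
- by move=> u v v'; rewrite !big_cons !big_nil !addr0 hr.
- by move=> c u v; rewrite !big_cons !big_nil !addr0 hb.
Qed.

End Teq2.

Lemma teq2_map (U V U' V' : lmodType k) (f : U -> U') (g : V -> V') :
  klinear f -> klinear g -> forall s t, teq2 s t -> teq2 (tmap2 f g s) (tmap2 f g t).
Proof.
move=> hf hg s t; elim => {s t}.
- by move=> s; apply: t2_refl.
- by move=> s t _ h; apply: t2_sym.
- by move=> s t u _ h1 _ h2; apply: t2_trans h1 h2.
- by move=> s1 t1 s2 t2 _ h1 _ h2; rewrite !tmap2_cat; apply: t2_cat.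
- by move=> a b; apply: t2_swap.
- by move=> v; rewrite /tmap2 /= klinear0 //; apply: t2_zero.
- by move=> u u' v; rewrite /tmap2 /= klinearD //; apply: t2_addl.
- by move=> u v v'; rewrite /tmap2 /= klinearD //; apply: t2_addr.
- by move=> c u v; rewrite /tmap2 /= (klinearZ _ hf) (klinearZ _ hg); apply: t2_bal.
Qed.

Lemma teq2_mapl (U V U' : lmodType k) (f : U -> U') (s t : seq (U * V)) :
  klinear f -> teq2 s t -> teq2 (tmap2 f id s) (tmap2 f id t).
Proof. by move=> hf; apply: teq2_map. Qed.

Lemma teq2_scale (U V : lmodType k) (c : k) (s t : seq (U * V)) :
  teq2 s t -> teq2 (tmap2 ( *:%R c) id s) (tmap2 ( *:%R c) id t).
Proof. exact/teq2_mapl/klinear_scale. Qed.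

Lemma tmap2_scale1 (U V : lmodType k) (s : seq (U * V)) : tmap2 ( *:%R 1) id s = s.
Proof. by rewrite (@eq_tmap2 _ _ _ _ _ id) ?tmap2_id // => x; rewrite scale1r. Qed.

Section TLinear.
Variables (U U' V : lmodType k) (r : U -> seq (U' * V)).
Hypothesis hr : tlinear r.

Lemma tlinearD x y : teq2 (r (x + y)) (r x ++ r y).
Proof. by have := hr 1 x y; rewrite scale1r tmap2_scale1. Qed.

Lemma tlinear0 : teq2 (r 0) [::].
Proof.
have := hr (-1) 0 0; rewrite scaler0 addr0 => h; apply: t2_trans h _.
rewrite (@eq_tmap2 _ _ _ _ _ (fun x => - x)); first exact: teq2_neg.
by move=> x; rewrite scaleN1r.
Qed.

Lemma tlinearZ c x : teq2 (r (c *: x)) (tmap2 ( *:%R c) id (r x)).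
Proof.
have := hr c x 0; rewrite addr0 => h; apply: t2_trans h _.
by rewrite -[X in teq2 _ X]cats0; apply: (cong_catl (teq2_cong _ _)); exact: tlinear0.
Qed.

End TLinear.

Section Teq3.
Variables U V W : lmodType k.
Notation R3 := (@teq3 k U V W).

Lemma teq3_zero2 u w : R3 [:: (u, 0, w)] [::].
Proof.
have -> : [:: (u, 0, w)] = [:: (u, 0 *: (0 : V), w)] by rewrite scaler0.
apply: t3_trans (t3_sym (t3_bal12 _ _ _ _)) _; rewrite scale0r; exact: t3_zero.
Qed.

Lemma teq3_zero1s (a : seq (V * W)) : R3 [seq (0, q.1, q.2) | q <- a] [::].
Proof.
elim: a => [|q a IH] /=; first exact: t3_refl.
exact: (t3_cat (t3_zero _ q.1 q.2) IH).
Qed.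

Lemma teq3_add1s (a : seq (V * W)) (u u' : U) :
  R3 [seq (u + u', q.1, q.2) | q <- a]
     ([seq (u, q.1, q.2) | q <- a] ++ [seq (u', q.1, q.2) | q <- a]).
Proof.
elim: a => [|q a IH] /=; first exact: t3_refl.
apply: t3_trans (t3_cat (t3_add1 _ _ _ _) IH) _.
exact: (cong_catACA (teq3_cong U V W) [:: _] [:: _]).
Qed.

Lemma teq3_add3s (a : seq (U * V)) (w w' : W) :
  R3 [seq (q.1, q.2, w + w') | q <- a]
     ([seq (q.1, q.2, w) | q <- a] ++ [seq (q.1, q.2, w') | q <- a]).
Proof.
elim: a => [|q a IH] /=; first exact: t3_refl.
apply: t3_trans (t3_cat (t3_add3 _ _ _ _) IH) _.
exact: (cong_catACA (teq3_cong U V W) [:: _] [:: _]).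
Qed.

Lemma teq3_tensorl (u : U) (a b : seq (V * W)) :
  teq2 a b -> R3 [seq (u, q.1, q.2) | q <- a] [seq (u, q.1, q.2) | q <- b].
Proof.
elim => {a b}.
- by move=> s; apply: t3_refl.
- by move=> s t _; apply: t3_sym.
- by move=> s t w _ h1 _ h2; apply: t3_trans h1 h2.
- by move=> s1 t1 s2 t2 _ h1 _ h2; rewrite !map_cat; apply: t3_cat.
- by move=> x y; apply: t3_swap.
- by move=> v /=; apply: teq3_zero2.
- by move=> v v' w /=; apply: t3_add2.
- by move=> v w w' /=; apply: t3_add3.
- by move=> c v w /=; apply: t3_bal23.
Qed.

Lemma teq3_tensorr (w : W) (a b : seq (U * V)) :
  teq2 a b -> R3 [seq (q.1, q.2, w) | q <- a] [seq (q.1, q.2, w) | q <- b].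
Proof.
elim => {a b}.
- by move=> s; apply: t3_refl.
- by move=> s t _; apply: t3_sym.
- by move=> s t u _ h1 _ h2; apply: t3_trans h1 h2.
- by move=> s1 t1 s2 t2 _ h1 _ h2; rewrite !map_cat; apply: t3_cat.
- by move=> x y; apply: t3_swap.
- by move=> v /=; apply: t3_zero.
- by move=> u u' v /=; apply: t3_add1.
- by move=> u v v' /=; apply: t3_add2.
- by move=> c u v /=; apply: t3_bal12.
Qed.

End Teq3.

Lemma teq3_mapl (U V W U' : lmodType k) (f : U -> U') (s t : seq (U * V * W)) :
  klinear f -> teq3 s t ->
  teq3 [seq (f x.1.1, x.1.2, x.2) | x <- s] [seq (f x.1.1, x.1.2, x.2) | x <- t].
Proof.
move=> hf; elim => {s t}.
- by move=> s; apply: t3_refl.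
- by move=> s t _; apply: t3_sym.
- by move=> s t u _ h1 _ h2; apply: t3_trans h1 h2.
- by move=> s1 t1 s2 t2 _ h1 _ h2; rewrite !map_cat; apply: t3_cat.
- by move=> a b; apply: t3_swap.
- by move=> v w /=; rewrite klinear0 //; apply: t3_zero.
- by move=> u u' v w /=; rewrite klinearD //; apply: t3_add1.
- by move=> u v v' w /=; apply: t3_add2.
- by move=> u v w w' /=; apply: t3_add3.
- by move=> c u v w /=; rewrite (klinearZ _ hf); apply: t3_bal12.
- by move=> c u v w /=; apply: t3_bal23.
Qed.

(* [expandl r s] is (r (x) id)(s) and [expandr d s] is (id (x) d)(s); the
   coassociativity axioms of [hopf] and [is_coaction] are stated in these terms. *)
Definition expandl (U U' X Y : lmodType k) (r : U -> seq (U' * X)) (s : seq (U * Y)) :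
    seq (U' * X * Y) :=
  flatten [seq [seq (q.1, q.2, p.2) | q <- r p.1] | p <- s].

Definition expandr (U X Y Z : lmodType k) (d : X -> seq (Y * Z)) (s : seq (U * X)) :
    seq (U * Y * Z) :=
  flatten [seq [seq (p.1, q.1, q.2) | q <- d p.2] | p <- s].

Lemma teq3_expandl (U U' X Y : lmodType k) (r : U -> seq (U' * X)) (s t : seq (U * Y)) :
  tlinear r -> teq2 s t -> teq3 (expandl r s) (expandl r t).
Proof.
move=> hr; elim => {s t}.
- by move=> s; apply: t3_refl.
- by move=> s t _; apply: t3_sym.
- by move=> s t u _ h1 _ h2; apply: t3_trans h1 h2.
- by move=> s1 t1 s2 t2 _ h1 _ h2; rewrite /expandl !map_cat !flatten_cat; apply: t3_cat.
- by move=> a b; rewrite /expandl /= !cats0; apply: (cong_catC (teq3_cong _ _ _)).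
- by move=> v; rewrite /expandl /= cats0; exact: teq3_tensorr v _ _ (tlinear0 hr).
- move=> u u' v; rewrite /expandl /= !cats0 -map_cat.
  exact: teq3_tensorr (tlinearD hr _ _).
- by move=> u v v'; rewrite /expandl /= !cats0; exact: teq3_add3s.
- move=> c u v; rewrite /expandl /= !cats0.
  apply: t3_trans (teq3_tensorr v (tlinearZ hr c u)) _.
  rewrite /tmap2 -map_comp; apply: (cong_map (teq3_cong _ _ _)) => q /=.
  exact: t3_trans (t3_bal12 _ _ _ _) (t3_bal23 _ _ _ _).
Qed.

Lemma teq3_expandr (U X Y Z : lmodType k) (d : X -> seq (Y * Z)) (s t : seq (U * X)) :
  tlinear d -> teq2 s t -> teq3 (expandr d s) (expandr d t).
Proof.
move=> hd; elim => {s t}.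
- by move=> s; apply: t3_refl.
- by move=> s t _; apply: t3_sym.
- by move=> s t u _ h1 _ h2; apply: t3_trans h1 h2.
- by move=> s1 t1 s2 t2 _ h1 _ h2; rewrite /expandr !map_cat !flatten_cat; apply: t3_cat.
- by move=> a b; rewrite /expandr /= !cats0; apply: (cong_catC (teq3_cong _ _ _)).
- by move=> v; rewrite /expandr /= cats0; exact: teq3_zero1s.
- by move=> u u' v; rewrite /expandr /= !cats0; exact: teq3_add1s.
- move=> u v v'; rewrite /expandr /= !cats0 -map_cat.
  exact: teq3_tensorl (tlinearD hd _ _).
- move=> c u v; rewrite /expandr /= !cats0.
  apply: t3_sym; apply: t3_trans (teq3_tensorl u (tlinearZ hd c v)) _.
  rewrite /tmap2 -map_comp; apply: (cong_map (teq3_cong _ _ _)) => q /=.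
  exact: t3_sym (t3_bal12 _ _ _ _).
Qed.

Lemma expandl_mapl (U U' V X Y : lmodType k) (r : V -> seq (U' * X)) (f : U -> V)
    (s : seq (U * Y)) :
  expandl r (tmap2 f id s) = expandl (r \o f) s.
Proof. by rewrite /expandl /tmap2 -map_comp. Qed.

Lemma map_expandl (U U' V X Y : lmodType k) (r : U -> seq (U' * X)) (f : U' -> V)
    (s : seq (U * Y)) :
  [seq (f x.1.1, x.1.2, x.2) | x <- expandl r s] = expandl (tmap2 f id \o r) s.
Proof.
rewrite /expandl map_flatten -map_comp; congr flatten.
by apply: eq_map => p /=; rewrite /tmap2 -!map_comp.
Qed.

Lemma expandr_mapl (U V X Y Z : lmodType k) (d : X -> seq (Y * Z)) (f : U -> V)
    (s : seq (U * X)) :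
  expandr d (tmap2 f id s) = [seq (f x.1.1, x.1.2, x.2) | x <- expandr d s].
Proof.
rewrite /expandr map_flatten /tmap2 -!map_comp; congr flatten.
by apply: eq_map => p /=; rewrite -map_comp.
Qed.

Lemma eq_teq3_expandl (U U' X Y : lmodType k) (r r' : U -> seq (U' * X)) (s : seq (U * Y)) :
  (forall u, teq2 (r u) (r' u)) -> teq3 (expandl r s) (expandl r' s).
Proof.
move=> h; apply: (cong_flatten (teq3_cong _ _ _)) => p _.
exact: teq3_tensorr.
Qed.

Record sum_rel (U V : lmodType k) := SumRel {
  srel :> seq (U * V) -> seq (U * V) -> Prop;
  srel_cong : comm_congruence srel;
  srel_teq2 : forall s t, teq2 s t -> srel s t;
  srel_scale : forall c s t, srel s t -> srel (tmap2 ( *:%R c) id s) (tmap2 ( *:%R c) id t)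
}.

Section Quotient.
Variables (U V : lmodType k) (E : sum_rel U V).

Definition fquot := {X : seq (U * V) -> Prop | exists s, X = E s}.
HB.instance Definition _ := gen_eqMixin fquot.
HB.instance Definition _ := gen_choiceMixin fquot.

Definition fclass (s : seq (U * V)) : fquot := exist _ (E s) (ex_intro _ s erefl).
Definition frepr (X : fquot) : seq (U * V) := sval (cid (svalP X)).

Lemma frepr_class X : fclass (frepr X) = X.
Proof.
rewrite /frepr; case: (cid _) => s hs /=; case: X hs => X hX /= hs; subst X.
by congr exist; apply: Prop_irrelevance.
Qed.

Lemma fclass_eq s t : fclass s = fclass t <-> E s t.
Proof.
have [Erefl Esym Etrans _ _] := srel_cong E.
split=> [/(congr1 sval) /= e | h]; first by rewrite e; apply: Erefl.
have e : E s = E t.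
  by apply: funext => u; apply: propext; split; [exact: Etrans (Esym _ _ h) | exact: Etrans h].
rewrite /fclass; move: (ex_intro _ s _) (ex_intro _ t _); rewrite e => p1 p2.
by congr exist; apply: Prop_irrelevance.
Qed.

Lemma class_frepr s : E (frepr (fclass s)) s.
Proof. by apply/fclass_eq; rewrite frepr_class. Qed.

Definition fadd (X Y : fquot) := fclass (frepr X ++ frepr Y).
Definition fopp (X : fquot) := fclass (tmap2 (fun x => - x) id (frepr X)).
Definition fzero := fclass [::].
Definition fscale (c : k) (X : fquot) := fclass (tmap2 ( *:%R c) id (frepr X)).

Lemma faddE s t : fadd (fclass s) (fclass t) = fclass (s ++ t).
Proof. by apply/fclass_eq; apply: (cong_cat (srel_cong E)); apply: class_frepr. Qed.

Lemma fscaleE c s : fscale c (fclass s) = fclass (tmap2 ( *:%R c) id s).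
Proof. by apply/fclass_eq; apply: srel_scale; apply: class_frepr. Qed.

Lemma foppE s : fopp (fclass s) = fclass (tmap2 (fun x => - x) id s).
Proof.
have eN : (fun x : U => - x) =1 *:%R (-1) by move=> x; rewrite scaleN1r.
by rewrite /fopp !(eq_tmap2 _ _ eN); apply: fscaleE.
Qed.

Lemma faddA : associative fadd.
Proof.
by move=> X Y Z; rewrite -(frepr_class X) -(frepr_class Y) -(frepr_class Z) !faddE catA.
Qed.

Lemma faddC : commutative fadd.
Proof.
move=> X Y; rewrite -(frepr_class X) -(frepr_class Y) !faddE.
exact/fclass_eq/srel_teq2/(cong_catC (teq2_cong _ _)).
Qed.

Lemma fadd0 : left_id fzero fadd.
Proof. by move=> X; rewrite -(frepr_class X) /fzero faddE. Qed.

Lemma faddN : left_inverse fzero fopp fadd.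
Proof. by move=> X; rewrite -(frepr_class X) foppE faddE; apply/fclass_eq/srel_teq2/teq2_neg. Qed.

HB.instance Definition _ := GRing.isZmodule.Build fquot faddA faddC fadd0 faddN.

Lemma fclass_cat s t : fclass (s ++ t) = fclass s + fclass t.
Proof. exact: (esym (faddE s t)). Qed.

Lemma fscaleA a b (X : fquot) : fscale a (fscale b X) = fscale (a * b) X.
Proof.
rewrite -(frepr_class X) !fscaleE tmap2_comp; congr fclass.
by apply: eq_tmap2 => x /=; rewrite scalerA.
Qed.

Lemma fscale1 : left_id 1 fscale.
Proof. by move=> X; rewrite -(frepr_class X) fscaleE tmap2_scale1. Qed.

Lemma fscaleDr : right_distributive fscale +%R.
Proof.
move=> c X Y; rewrite -(frepr_class X) -(frepr_class Y).
by rewrite -fclass_cat !fscaleE -fclass_cat tmap2_cat.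
Qed.

Lemma fscaleDl (X : fquot) : {morph fscale^~ X : a b / a + b}.
Proof.
move=> a b; rewrite -(frepr_class X) !fscaleE -fclass_cat.
exact/fclass_eq/srel_teq2/teq2_scaleDl.
Qed.

HB.instance Definition _ :=
  GRing.Zmodule_isLmodule.Build k fquot fscaleA fscale1 fscaleDr fscaleDl.

Lemma fclass_scale c s : fclass (tmap2 ( *:%R c) id s) = c *: fclass s.
Proof. exact: (esym (fscaleE c s)). Qed.

(* (U (x) V) (x) W, read on formal sums of U (x) V (x) W *)
Definition tassoc (W : lmodType k) (s : seq (U * V * W)) : seq (fquot * W) :=
  [seq (fclass [:: (x.1.1, x.1.2)], x.2) | x <- s].

Lemma teq2_tassoc (W : lmodType k) (s t : seq (U * V * W)) :
  teq3 s t -> teq2 (tassoc s) (tassoc t).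
Proof.
have E2 a b : teq2 a b -> fclass a = fclass b by move=> h; apply/fclass_eq/srel_teq2.
elim => {s t}.
- by move=> s; apply: t2_refl.
- by move=> s t _; apply: t2_sym.
- by move=> s t u _ h1 _ h2; apply: t2_trans h1 h2.
- by move=> s1 t1 s2 t2 _ h1 _ h2; rewrite /tassoc !map_cat; apply: t2_cat.
- by move=> a b; apply: t2_swap.
- by move=> v w; rewrite /tassoc /= (E2 _ _ (t2_zero _ _)); apply: t2_zero.
- move=> u u' v w; rewrite /tassoc /= (E2 _ _ (t2_addl _ _ _)).
  by rewrite -[[:: _; _]]cat1s fclass_cat; apply: t2_addl.
- move=> u v v' w; rewrite /tassoc /= (E2 _ _ (t2_addr _ _ _)).
  by rewrite -[[:: _; _]]cat1s fclass_cat; apply: t2_addl.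
- by move=> u v w w'; apply: t2_addr.
- by move=> c u v w; rewrite /tassoc /= (E2 _ _ (t2_bal _ _ _)); apply: t2_refl.
- move=> c u v w; rewrite /tassoc /= -(E2 _ _ (t2_bal _ _ _)).
  by rewrite -[[:: (c *: u, v)]]/(tmap2 ( *:%R c) id [:: (u, v)]) fclass_scale; apply: t2_bal.
Qed.

Lemma teq2_fclass_split (W : lmodType k) (h : W) (s : seq (U * V)) :
  teq2 [seq (fclass [:: q], h) | q <- s] [:: (fclass s, h)].
Proof.
elim: s => [|q s IH] /=; first by apply: t2_sym; apply: t2_zero.
apply: t2_trans (cong_catl (teq2_cong _ _) [:: _] IH) _.
by rewrite -[q :: s]cat1s fclass_cat; apply: t2_sym; apply: t2_addl.
Qed.

End Quotient.

Definition teq2_rel (U V : lmodType k) : sum_rel U V :=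
  SumRel (teq2_cong U V) (fun s t h => h) (@teq2_scale U V).

Notation tensor U V := (fquot (teq2_rel U V)).

Lemma tlinear_frepr (U V : lmodType k) : tlinear (@frepr _ _ (teq2_rel U V)).
Proof.
move=> c X Y.
have -> : c *: X + Y = fclass _ (tmap2 ( *:%R c) id (frepr X) ++ frepr Y).
  by rewrite fclass_cat fclass_scale !frepr_class.
exact: (class_frepr (teq2_rel U V)).
Qed.

Lemma teq3_of_tassoc (U V W : lmodType k) (s t : seq (U * V * W)) :
  teq2 (tassoc (teq2_rel U V) s) (tassoc (teq2_rel U V) t) -> teq3 s t.
Proof.
have back (s0 : seq (U * V * W)) : teq3 (expandl (@frepr _ _ (teq2_rel U V)) (tassoc _ s0)) s0.
  elim: s0 => [|[[u v] w] s0 IH] /=; first exact: t3_refl.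
  rewrite /expandl /= -[_ :: s0]cat1s; apply: t3_cat IH.
  by have := teq3_tensorr w (class_frepr (teq2_rel U V) [:: (u, v)]).
move=> h; apply: t3_trans (t3_sym (back s)) (t3_trans _ (back t)).
exact: (teq3_expandl (@tlinear_frepr U V) h).
Qed.

Section TensorMap.
Variables (P V W : lmodType k) (f : P -> V).
Hypothesis hf : klinear f.

Definition tensor_mapl (X : tensor P W) : tensor V W :=
  fclass (teq2_rel V W) (tmap2 f id (frepr X)).

Lemma tensor_mapl_class s : tensor_mapl (fclass _ s) = fclass _ (tmap2 f id s).
Proof. by apply/fclass_eq; apply: teq2_mapl => //; exact: (class_frepr (teq2_rel P W)). Qed.

Lemma tensor_mapl_lin : klinear tensor_mapl.
Proof.
move=> c X Y; rewrite -(frepr_class X) -(frepr_class Y).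
rewrite -fclass_scale -fclass_cat !tensor_mapl_class -fclass_scale -fclass_cat.
rewrite tmap2_cat !tmap2_comp; congr (fclass _ (_ ++ _)).
by apply: eq_tmap2 => x /=; rewrite (klinearZ _ hf).
Qed.

Lemma tassoc_mapl (s : seq (P * W * W)) :
  tassoc (teq2_rel V W) [seq (f x.1.1, x.1.2, x.2) | x <- s] =
  tmap2 tensor_mapl id (tassoc _ s).
Proof. by rewrite /tassoc /tmap2 -!map_comp; apply: eq_map => x /=; rewrite tensor_mapl_class. Qed.

End TensorMap.

Section Flat.
Variable H : comAlgType k.
Hypothesis Hflat : flat_over H.

Lemma flat_teq3_inj (P V : lmodType k) (f : P -> V) (s t : seq (P * H * H)) :
  klinear f -> injective f ->
  teq3 [seq (f x.1.1, x.1.2, x.2) | x <- s] [seq (f x.1.1, x.1.2, x.2) | x <- t] ->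
  teq3 s t.
Proof.
move=> hf fi /(teq2_tassoc (teq2_rel V H)); rewrite !tassoc_mapl // => h.
have map_inj : injective (tensor_mapl (W := H) f).
  move=> X Y e; rewrite -(frepr_class X) -(frepr_class Y).
  apply/(fclass_eq (teq2_rel P H)); apply: (Hflat hf fi).
  exact/(fclass_eq (teq2_rel V H)).
exact/teq3_of_tassoc/(Hflat (tensor_mapl_lin hf) map_inj).
Qed.

End Flat.

End Tensor.

(** * Submodules and finite generation *)

Section Submodule.
Variable k : comNzRingType.

Record submodule (U : lmodType k) := Submodule {
  smem :> U -> Prop;
  smem0 : smem 0;
  smemD : forall x y, smem x -> smem y -> smem (x + y);
  smemZ : forall c x, smem x -> smem (c *: x)
}.

Section SubType.
Variables (U : lmodType k) (S : submodule U).

Definition subm := {x : U | S x}.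
HB.instance Definition _ := gen_eqMixin subm.
HB.instance Definition _ := gen_choiceMixin subm.

Lemma subm_ext (x y : subm) : sval x = sval y -> x = y.
Proof.
case: x y => [x hx] [y hy] /= e; subst y; congr exist; exact: Prop_irrelevance.
Qed.

Lemma smemN x : S x -> S (- x).
Proof. by move=> h; rewrite -scaleN1r; apply: smemZ. Qed.

Lemma smem_sum (I : Type) (r : seq I) (P : pred I) (F : I -> U) :
  (forall i, P i -> S (F i)) -> S (\sum_(i <- r | P i) F i).
Proof. by move=> h; apply: big_ind => //; [exact: smem0 | exact: smemD]. Qed.

Definition sadd (x y : subm) : subm := exist _ _ (smemD (svalP x) (svalP y)).
Definition sopp (x : subm) : subm := exist _ _ (smemN (svalP x)).
Definition szero : subm := exist _ _ (smem0 S).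
Definition sscale (c : k) (x : subm) : subm := exist _ _ (smemZ c (svalP x)).

Lemma saddA : associative sadd.
Proof. by move=> x y z; apply: subm_ext; rewrite /= addrA. Qed.
Lemma saddC : commutative sadd.
Proof. by move=> x y; apply: subm_ext; rewrite /= addrC. Qed.
Lemma sadd0 : left_id szero sadd.
Proof. by move=> x; apply: subm_ext; rewrite /= add0r. Qed.
Lemma saddN : left_inverse szero sopp sadd.
Proof. by move=> x; apply: subm_ext; rewrite /= addNr. Qed.
HB.instance Definition _ := GRing.isZmodule.Build subm saddA saddC sadd0 saddN.

Lemma sscaleA a b (x : subm) : sscale a (sscale b x) = sscale (a * b) x.
Proof. by apply: subm_ext; rewrite /= scalerA. Qed.
Lemma sscale1 : left_id 1 sscale.
Proof. by move=> x; apply: subm_ext; rewrite /= scale1r. Qed.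
Lemma sscaleDr : right_distributive sscale +%R.
Proof. by move=> c x y; apply: subm_ext; rewrite /= scalerDr. Qed.
Lemma sscaleDl (x : subm) : {morph sscale^~ x : a b / a + b}.
Proof. by move=> a b; apply: subm_ext; rewrite /= scalerDl. Qed.
HB.instance Definition _ :=
  GRing.Zmodule_isLmodule.Build k subm sscaleA sscale1 sscaleDr sscaleDl.

Definition subm_val (x : subm) : U := sval x.

Lemma klinear_subm_val : klinear subm_val.
Proof. by []. Qed.

Lemma subm_val_inj : injective subm_val.
Proof. exact: subm_ext. Qed.

End SubType.

Definition submI (U : lmodType k) (S T : submodule U) : submodule U :=
  @Submodule U (fun x => S x /\ T x) (conj (smem0 S) (smem0 T))
    (fun x y hx hy => conj (smemD (proj1 hx) (proj1 hy)) (smemD (proj2 hx) (proj2 hy)))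
    (fun c x hx => conj (smemZ c (proj1 hx)) (smemZ c (proj2 hx))).

Section Image.
Variables (U M : lmodType k) (f : U -> M).
Hypothesis f_lin : klinear f.

Definition image_sub : submodule M.
Proof.
refine (@Submodule M (fun m => exists u, m = f u) _ _ _).
- by exists 0; rewrite (klinear0 f_lin).
- by move=> x y [u ->] [v ->]; exists (u + v); rewrite (klinearD f_lin).
- by move=> c x [u ->]; exists (c *: u); rewrite (klinearZ _ f_lin).
Defined.

Definition to_image (u : U) : subm image_sub := exist _ (f u) (ex_intro _ u erefl).

Lemma to_image_lin : klinear to_image.
Proof. by move=> c x y; apply: subm_ext => /=; apply: f_lin. Qed.

Lemma to_image_surj m : exists u, to_image u = m.
Proof. by case: m => m [u e]; exists u; apply: subm_ext => /=; rewrite e. Qed.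

End Image.

Definition inspan (U : lmodType k) (G : seq U) (x : U) : Prop :=
  exists c : 'I_(size G) -> k, x = \sum_(i < size G) c i *: G`_i.

Lemma inspan_ind (U : lmodType k) (G : seq U) (P : U -> Prop) :
  P 0 -> (forall x y, P x -> P y -> P (x + y)) -> (forall c x, P x -> P (c *: x)) ->
  (forall y, y \in G -> P y) -> forall x, inspan G x -> P x.
Proof.
move=> h0 hD hZ hm x [c ->]; elim/big_ind: _ => // i _.
by apply/hZ/hm/mem_nth.
Qed.

Lemma inspan0 (U : lmodType k) (G : seq U) : inspan G 0.
Proof. by exists (fun=> 0); rewrite big1 // => i _; rewrite scale0r. Qed.

Lemma inspanD (U : lmodType k) (G : seq U) x y :
  inspan G x -> inspan G y -> inspan G (x + y).
Proof.
move=> [c ->] [d ->]; exists (fun i => c i + d i); rewrite -big_split.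
by apply: eq_bigr => i _; rewrite scalerDl.
Qed.

Lemma inspanZ (U : lmodType k) (G : seq U) a x : inspan G x -> inspan G (a *: x).
Proof.
move=> [c ->]; exists (fun i => a * c i); rewrite scaler_sumr.
by apply: eq_bigr => i _; rewrite scalerA.
Qed.

Definition span (U : lmodType k) (G : seq U) : submodule U :=
  Submodule (@inspan0 U G) (@inspanD U G) (@inspanZ U G).

Lemma inspan_sum (U : lmodType k) (G : seq U) (I : Type) (r : seq I) (P : pred I) F :
  (forall i, P i -> inspan G (F i)) -> inspan G (\sum_(i <- r | P i) F i).
Proof. by move=> h; apply: big_ind => //; [exact: inspan0 | exact: inspanD]. Qed.

Lemma inspan_mem (U : lmodType k) (G : seq U) y : y \in G -> inspan G y.
Proof.
move=> hy; have hj : (index y G < size G)%N by rewrite index_mem.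
exists (fun i => if i == Ordinal hj then 1 else 0).
rewrite (bigD1 (Ordinal hj)) //= eqxx scale1r nth_index // big1 ?addr0 // => i /negbTE ->.
by rewrite scale0r.
Qed.

Lemma inspan_subset (U : lmodType k) (G G' : seq U) :
  (forall y, y \in G -> inspan G' y) -> forall x, inspan G x -> inspan G' x.
Proof. exact: (inspan_ind (smem0 (span G')) (@smemD _ (span G')) (@smemZ _ (span G'))). Qed.

Lemma inspan_nil (U : lmodType k) (x : U) : inspan [::] x -> x = 0.
Proof. by move=> [c ->]; rewrite big_ord0. Qed.

Lemma inspan_cons (U : lmodType k) (a : U) (L : seq U) x : inspan (a :: L) x ->
  exists c y, inspan L y /\ x = c *: a + y.
Proof.
move: x; apply: (inspan_ind (P := fun x => exists c y, inspan L y /\ x = c *: a + y)).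
- by exists 0, 0; split; [apply: inspan0 | rewrite scale0r addr0].
- move=> x1 y1 [c1 [z1 [h1 ->]]] [c2 [z2 [h2 ->]]]; exists (c1 + c2), (z1 + z2).
  by split; [exact: inspanD | rewrite scalerDl addrACA].
- move=> c x1 [c1 [z1 [h1 ->]]]; exists (c * c1), (c *: z1).
  by split; [exact: inspanZ | rewrite scalerDr scalerA].
- move=> y; rewrite inE => /predU1P [->|hy].
    by exists 1, 0; split; [apply: inspan0 | rewrite scale1r addr0].
  by exists 0, y; split; [apply: inspan_mem | rewrite scale0r add0r].
Qed.

Lemma inspan_map_inj (U U' : lmodType k) (f : U -> U') (G : seq U) x :
  klinear f -> injective f -> inspan (map f G) (f x) -> inspan G x.
Proof.
move=> hf fi h.
suff [y [hy /fi ->]] : exists y, inspan G y /\ f x = f y by [].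
apply: (inspan_ind (P := fun z => exists y, inspan G y /\ z = f y)) h.
- by exists 0; split; [apply: inspan0 | rewrite klinear0].
- move=> a b [y1 [h1 ->]] [y2 [h2 ->]]; exists (y1 + y2).
  by split; [apply: inspanD | rewrite klinearD].
- move=> c a [y1 [h1 ->]]; exists (c *: y1).
  by split; [apply: inspanZ | rewrite (klinearZ _ hf)].
- by move=> _ /mapP [y hy ->]; exists y; split; [apply: inspan_mem | ].
Qed.

Definition generates (U : lmodType k) (G : seq U) (S : U -> Prop) : Prop :=
  (forall y, y \in G -> S y) /\ (forall x, S x -> inspan G x).

Section NoetherianStep.
Variables (U : lmodType k) (a : U) (L : seq U) (S : submodule U).
Hypothesis S_span : forall x, S x -> inspan (a :: L) x.

Definition lead_coeff (c : k) := exists y, S y /\ inspan L (y - c *: a).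

Lemma lead_coeff_ideal : is_ideal lead_coeff.
Proof.
split.
- by exists 0; split; [exact: smem0 | rewrite scale0r subr0; apply: inspan0].
- move=> x y [y1 [s1 h1]] [y2 [s2 h2]]; exists (y1 + y2); split; first exact: smemD.
  by rewrite scalerDl opprD addrACA; apply: inspanD.
- move=> c x [y1 [s1 h1]]; exists (c *: y1); split; first exact: smemZ.
  by rewrite -scalerA -scalerBr; apply: inspanZ.
Qed.

Definition lead_witness (c : k) : U :=
  if pselect (lead_coeff c) is left h then sval (cid h) else 0.

Lemma lead_witnessP c :
  lead_coeff c -> S (lead_witness c) /\ inspan L (lead_witness c - c *: a).
Proof. by rewrite /lead_witness; case: pselect => // h _; case: (cid h). Qed.

Lemma lead_coeff_mem (gs : seq k) c :
  (forall c, lead_coeff c <-> exists d : 'I_(size gs) -> k, c = \sum_(i < size gs) d i * gs`_i) ->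
  c \in gs -> lead_coeff c.
Proof.
move=> hgs hc; have hj : (index c gs < size gs)%N by rewrite index_mem.
apply/hgs; exists (fun i => if i == Ordinal hj then 1 else 0).
rewrite (bigD1 (Ordinal hj)) //= eqxx mul1r nth_index // big1 ?addr0 // => i /negbTE ->.
exact: mul0r.
Qed.

Lemma generates_cons (G' : seq U) (gs : seq k) :
  generates G' (submI S (span L)) ->
  (forall c, lead_coeff c <-> exists d : 'I_(size gs) -> k, c = \sum_(i < size gs) d i * gs`_i) ->
  generates (G' ++ map lead_witness gs) S.
Proof.
move=> [G'S G'gen] hgs; have gsJ := lead_coeff_mem hgs.
split=> [y | x hx].
  rewrite mem_cat => /orP [/G'S [] // | /mapP [c hc ->]].
  exact: (lead_witnessP (gsJ c hc)).1.
have [c [y [hy ex]]] := inspan_cons (S_span hx).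
have [d hd] : exists d : 'I_(size gs) -> k, c = \sum_(i < size gs) d i * gs`_i.
  by apply/(hgs c); exists x; split=> //; rewrite ex addrAC subrr add0r.
have wP (i : 'I_(size gs)) : S (lead_witness gs`_i) /\ inspan L (lead_witness gs`_i - gs`_i *: a).
  exact: (lead_witnessP (gsJ _ (mem_nth 0 (ltn_ord i)))).
pose w := \sum_(i < size gs) d i *: lead_witness gs`_i.
have w_in : inspan (G' ++ map lead_witness gs) w.
  apply: inspan_sum => i _; apply/inspanZ/inspan_mem.
  by rewrite mem_cat map_f ?mem_nth ?orbT.
have z_in : submI S (span L) (x - w).
  split; first by apply: smemD hx (smemN (smem_sum _ (fun i _ => smemZ _ (wP i).1))).
  have -> : x - w = (x - c *: a) - \sum_(i < size gs) d i *: (lead_witness gs`_i - gs`_i *: a).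
    have -> : \sum_(i < size gs) d i *: (lead_witness gs`_i - gs`_i *: a) = w - c *: a.
      by rewrite hd scaler_suml -sumrB; apply: eq_bigr => i _; rewrite scalerBr scalerA.
    by rewrite opprB addrA subrK.
  apply: inspanD; first by rewrite ex addrAC subrr add0r.
  rewrite -scaleN1r; apply/inspanZ/inspan_sum => i _.
  exact/inspanZ/(wP i).2.
rewrite -(subrK w x); apply: inspanD w_in; apply: inspan_subset (G'gen _ z_in) => v hv.
by apply: inspan_mem; rewrite mem_cat hv.
Qed.

End NoetherianStep.

Lemma noetherian_generates (U : lmodType k) (L : seq U) (S : submodule U) :
  noetherian k -> (forall x, S x -> inspan L x) -> exists G, generates G S.
Proof.
move=> hn; elim: L S => [|a L IH] S SL.
  by exists [::]; split=> // x /SL /inspan_nil ->; exact: inspan0.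
have [gs hgs] := hn _ (lead_coeff_ideal a L S).
have [G' hG'] := IH (submI S (span L)) (fun x hx => proj2 hx).
by exists (G' ++ map (lead_witness a L S) gs); apply: generates_cons.
Qed.

End Submodule.

Arguments to_image_lin {k U M f} f_lin.
Arguments to_image_surj {k U M f} f_lin m.

(** * Right exactness of the tensor product *)

Section RightExact.
Variable k : comNzRingType.
Variables (P U D A : lmodType k) (pi : U -> D) (iota : P -> U).
Hypotheses (pi_lin : klinear pi) (iota_lin : klinear iota).

(* equality in (U (x) A) / image of (P (x) A) *)
Definition teq2_mod (s t : seq (U * A)) :=
  exists p p' : seq (P * A), teq2 (s ++ tmap2 iota id p) (t ++ tmap2 iota id p').

Lemma teq2_modW s t : teq2 s t -> teq2_mod s t.
Proof. by move=> h; exists [::], [::]; rewrite /= !cats0. Qed.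

Lemma teq2_mod_cong : comm_congruence teq2_mod.
Proof.
have C := teq2_cong U A; constructor.
- by move=> s; apply/teq2_modW/t2_refl.
- by move=> s t [p [p' h]]; exists p', p; apply: t2_sym.
- move=> s t u [p [p' h1]] [q [q' h2]]; exists (p ++ q), (q' ++ p').
  rewrite !tmap2_cat !catA; apply: t2_trans (cong_catr C _ h1) _.
  rewrite -catA; apply: t2_trans (cong_catl C _ (cong_catC C _ _)) _.
  by rewrite catA; apply: cong_catr.
- move=> s1 t1 s2 t2 [p [p' h1]] [q [q' h2]]; exists (p ++ q), (p' ++ q').
  rewrite !tmap2_cat; apply: t2_trans (cong_catACA C _ _ _ _) _.
  exact: t2_trans (t2_cat h1 h2) (t2_sym (cong_catACA C _ _ _ _)).
- by move=> a b; apply/teq2_modW/t2_swap.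
Qed.

Lemma teq2_mod_scale c s t :
  teq2_mod s t -> teq2_mod (tmap2 ( *:%R c) id s) (tmap2 ( *:%R c) id t).
Proof.
move=> [p [p' h]]; exists (tmap2 ( *:%R c) id p), (tmap2 ( *:%R c) id p').
have e q : tmap2 iota id (tmap2 ( *:%R c) id q) = tmap2 ( *:%R c) id (tmap2 iota id q).
  by rewrite !tmap2_comp; apply: eq_tmap2 => x /=; rewrite (klinearZ _ iota_lin).
by rewrite !e -!tmap2_cat; apply: teq2_scale.
Qed.

Definition mod_rel : sum_rel U A := SumRel teq2_mod_cong teq2_modW teq2_mod_scale.

Lemma teq2_mod_nil s : teq2_mod s [::] -> exists t, teq2 s (tmap2 iota id t).
Proof.
move=> [p [p' hp]]; exists (p' ++ tmap2 (fun x => - x) id p); rewrite tmap2_cat /=.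
have -> : tmap2 iota id (tmap2 (fun x => - x) id p) =
          tmap2 (fun x => - x) id (tmap2 iota id p).
  by rewrite !tmap2_comp; apply: eq_tmap2 => x /=; rewrite (klinearN iota_lin).
have C := teq2_cong U A.
apply: t2_trans (cong_catr C _ hp).
rewrite -catA -{1}[s]cats0; apply: (cong_catl C); apply: t2_sym.
exact: t2_trans (cong_catC C _ _) (teq2_neg _).
Qed.

Hypothesis pi_surj : forall d, exists u, pi u = d.
Hypothesis pi_ker : forall u, pi u = 0 -> exists p, iota p = u.

Lemma teq2_mod_same s t : tmap2 pi id s = tmap2 pi id t -> teq2_mod s t.
Proof.
have C := teq2_mod_cong.
elim: s t => [|[u a] s IH] [|[u' a'] t] //= => [_ | [e1 <- /IH h]].
  exact: (cong_refl C).
apply: (cong_cat C (s1 := [:: (u, a)]) (t1 := [:: (u', a)])) h.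
have [p hp] : exists p, iota p = u - u'.
  by apply: pi_ker; rewrite (klinearD pi_lin) (klinearN pi_lin) e1 subrr.
exists [::], [:: (p, a)]; rewrite /= hp; apply: t2_sym.
by apply: t2_trans (t2_sym (t2_addl _ _ _)) _; rewrite addrC subrK; apply: t2_refl.
Qed.

Definition lift (x : seq (D * A)) : seq (U * A) :=
  [seq (sval (cid (pi_surj p.1)), p.2) | p <- x].

Lemma liftK x : tmap2 pi id (lift x) = x.
Proof.
rewrite /lift /tmap2 -map_comp -[RHS]map_id; apply: eq_map => -[d a] /=.
by case: (cid _) => u /= ->.
Qed.

Lemma teq2_mod_lift_of x y s t :
  tmap2 pi id s = x -> tmap2 pi id t = y -> teq2 s t -> teq2_mod (lift x) (lift y).
Proof.
have C := teq2_mod_cong; move=> hs ht h.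
apply: (cong_trans C (teq2_mod_same _) (cong_trans C (teq2_modW h) (teq2_mod_same _))).
  by rewrite liftK hs.
by rewrite liftK ht.
Qed.

Lemma teq2_mod_lift x y : teq2 x y -> teq2_mod (lift x) (lift y).
Proof.
have C := teq2_mod_cong.
elim => {x y}.
- by move=> x; apply: cong_refl.
- by move=> x y _; apply: cong_sym.
- by move=> x y z _ h1 _ h2; apply: (cong_trans C h1 h2).
- by move=> x1 y1 x2 y2 _ h1 _ h2; rewrite /lift !map_cat; apply: cong_cat.
- by move=> a b; apply: cong_swap.
- move=> v; apply: (teq2_mod_lift_of (s := [:: (0, v)]) (t := [::])) (t2_zero _ _) => //.
  by rewrite /tmap2 /= klinear0.
- move=> d d' v; have [u <-] := pi_surj d; have [u' <-] := pi_surj d'.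
  apply: teq2_mod_lift_of (t2_addl u u' v) => //.
  by rewrite /tmap2 /= (klinearD pi_lin).
- move=> d v v'; have [u <-] := pi_surj d.
  exact: teq2_mod_lift_of (t2_addr u v v').
- move=> c d v; have [u <-] := pi_surj d.
  apply: teq2_mod_lift_of (t2_bal c u v) => //.
  by rewrite /tmap2 /= (klinearZ _ pi_lin).
Qed.

Lemma right_exact t : teq2 (tmap2 pi id t) [::] ->
  exists t' : seq (P * A), teq2 t (tmap2 iota id t').
Proof.
move=> /teq2_mod_lift h; apply: teq2_mod_nil.
have C := teq2_mod_cong.
apply: (cong_trans C (teq2_mod_same _) (cong_trans C h (teq2_mod_same _))).
  by rewrite liftK.
by rewrite liftK.
Qed.

End RightExact.

Section Comodule.
Variables (k : comNzRingType) (H : comAlgType k) (K : hopf H).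

Lemma cm_lin (W : comod K) : tlinear (@cm_co _ _ K W).
Proof. by case: (cm_coP W). Qed.

Lemma cm_coassoc (W : comod K) (v : W) :
  teq3 (expandl (@cm_co _ _ K W) (cm_co v)) (expandr (comul K) (cm_co v)).
Proof. by case: (cm_coP W) => _ h _; exact: h. Qed.

Lemma cm_counit (W : comod K) (v : W) : \sum_(p <- cm_co v) counit K p.2 *: p.1 = v.
Proof. by case: (cm_coP W). Qed.

Lemma counit0 : counit K 0 = 0.
Proof.
have := counit_lin K 1 0 0; rewrite scale1r addr0 mul1r => e.
by apply: (addrI (counit K 0)); rewrite addr0 -e.
Qed.

Lemma big_counit_teq2 (U : lmodType k) (s t : seq (U * H)) : teq2 s t ->
  \sum_(p <- s) counit K p.2 *: p.1 = \sum_(p <- t) counit K p.2 *: p.1.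
Proof.
apply: (big_teq2 (phi := fun p : U * H => counit K p.2 *: p.1)).
- by move=> v /=; rewrite scaler0.
- by move=> u u' v /=; rewrite scalerDr.
- move=> u v v' /=; rewrite -scalerDl.
  by have := counit_lin K 1 v v'; rewrite scale1r mul1r => ->.
- move=> c u v /=; rewrite scalerA.
  have := counit_lin K c v 0; rewrite addr0 counit0 addr0 => ->.
  by rewrite mulrC.
Qed.

End Comodule.

Arguments cm_lin {k H K} W.

Lemma is_hom_comp (k : comNzRingType) (H : comAlgType k) (U V W : lmodType k)
    (rU : U -> seq (U * H)) (rV : V -> seq (V * H)) (rW : W -> seq (W * H))
    (f : U -> V) (g : V -> W) :
  is_hom rU rV f -> is_hom rV rW g -> is_hom rU rW (g \o f).
Proof.
move=> [f_lin hf] [g_lin hg]; split; first exact: klinear_comp.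
move=> v; rewrite -tmap2_comp; exact: t2_trans (teq2_mapl g_lin (hf v)) (hg (f v)).
Qed.

Lemma flatten_map_flatten (X Y : Type) (F : X -> seq Y) (L : seq (seq X)) :
  flatten (map F (flatten L)) = flatten (map (fun l => flatten (map F l)) L).
Proof. by elim: L => //= l L IH; rewrite map_cat flatten_cat IH. Qed.

(** * The direct sum as a K-module *)

Section DirectSumComodule.
Variables (k : comNzRingType) (H : comAlgType k) (K : hopf H) (I : Type) (V : I -> comod K).
Notation Vc := (fun i => cm_car (V i)).
Notation DS := (dsum Vc).
Notation inj i := (@dinj k I Vc i).
Notation prj := (@dproj k I Vc).
Notation rho := (@cm_co _ _ K _).
Notation dco := (@dsum_co _ _ K I V).

Lemma dinj_lin i : klinear (inj i).
Proof.
move=> c x y; apply: dsum_ext => j /=; rewrite /dinj_fun.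
by case: pselect => [e|ne]; [case: j / e | rewrite scaler0 addr0].
Qed.

Lemma dprojK i (v : V i) : prj i (inj i v) = v.
Proof.
rewrite /dproj /= /dinj_fun; case: pselect => // e.
by have -> : e = erefl by apply: Prop_irrelevance.
Qed.

Lemma dproj_dinj_ne i j (v : V i) : i <> j -> prj j (inj i v) = 0.
Proof. by move=> ne; rewrite /dproj /= /dinj_fun; case: pselect. Qed.

Lemma dsum_val_sum (J : Type) (s : seq J) (F : J -> DS) j :
  sval (\sum_(a <- s) F a) j = \sum_(a <- s) sval (F a) j.
Proof. by elim: s => [|a s IH]; rewrite ?big_nil // !big_cons -IH. Qed.

Definition supp_list (x : DS) : seq I := sval (cid (svalP x)).

Lemma supp_listP x i : ~ List.In i (supp_list x) -> sval x i = 0.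
Proof. by rewrite /supp_list; case: (cid _) => s hs /=; exact: hs. Qed.

Lemma dsuppP (x : DS) i : ~ List.In i (dsupp x) -> sval x i = 0.
Proof. by move=> h; apply: supp_listP => h'; apply/h/List.nodup_In. Qed.

Lemma tmap2_dprojK i (s : seq (V i * H)) : tmap2 (prj i) id (tmap2 (inj i) id s) = s.
Proof. by rewrite tmap2_comp (@eq_tmap2 _ _ _ _ _ id) ?tmap2_id // => v; apply: dprojK. Qed.

Lemma teq2_dproj_dinj_ne i j (s : seq (V i * H)) : i <> j ->
  teq2 (tmap2 (prj j) id (tmap2 (inj i) id s)) [::].
Proof.
move=> ne; rewrite tmap2_comp; elim: s => [|[v h] s IH] /=; first exact: t2_refl.
by rewrite [X in (X, h)](dproj_dinj_ne v ne); exact: (t2_cat (t2_zero _ _) IH).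
Qed.

Lemma dproj_flatten (f : DS) (j : I) (J : seq I) : List.NoDup J ->
  teq2 (tmap2 (prj j) id (flatten [seq tmap2 (inj i) id (rho (prj i f)) | i <- J]))
       (if pselect (List.In j J) then rho (prj j f) else [::]).
Proof.
elim: J => [|i J IH] hnd /=; first by case: pselect => [[]|h] /=; apply: t2_refl.
have /List.NoDup_cons_iff [hi /IH {}IH] := hnd.
rewrite tmap2_cat; move: IH; case: (pselect (i = j)) => [<-|ne].
  case: pselect => [/hi []|_] /= IH; rewrite tmap2_dprojK.
  case: pselect => [_|[]] /=; last by left.
  by rewrite -[X in teq2 _ X]cats0; apply: (cong_catl (teq2_cong _ _)).
case: pselect => hJ IH; rewrite -[X in teq2 _ X]cat0s;
  apply: t2_cat (teq2_dproj_dinj_ne _ ne) _; case: pselect => hJ' //=; exfalso.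
- by apply: hJ'; right.
- by case: hJ' => [/ne|/hJ].
Qed.

Lemma dsum_co_proj (f : DS) j : teq2 (tmap2 (prj j) id (dco f)) (rho (prj j f)).
Proof.
apply: t2_trans (dproj_flatten f j (List.NoDup_nodup _ _)) _.
case: pselect => [hj|h] /=; first exact: t2_refl.
have -> : prj j f = 0 := dsuppP h.
by apply: t2_sym; exact: (tlinear0 (cm_lin (V j))).
Qed.

Lemma dsum_val_sum_dinj (x : DS) (J : seq I) j : List.NoDup J ->
  sval (\sum_(i <- J) inj i (prj i x)) j = if pselect (List.In j J) then sval x j else 0.
Proof.
rewrite dsum_val_sum; elim: J => [|i J IH] hnd; first by rewrite big_nil; case: pselect.
have /List.NoDup_cons_iff [hi /IH {}IH] := hnd.
rewrite big_cons IH /= /dinj_fun; case: (pselect (i = j)) => [e|ne].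
  case: j / e {IH} => /=.
  case: (pselect (List.In i J)) => [/hi [] | h1] /=.
  by case: (pselect (i = i \/ List.In i J)) => [h2|[]] /=; [rewrite addr0 | left].
case: (pselect (List.In j J)) => h1; case: (pselect (i = j \/ List.In j J)) => h2.
- by rewrite add0r.
- by exfalso; apply: h2; right.
- by exfalso; case: h2 => [/ne|/h1].
- by rewrite addr0.
Qed.

Lemma dsum_decomp (x : DS) (J : seq I) : List.NoDup J ->
  (forall i, ~ List.In i J -> sval x i = 0) -> x = \sum_(i <- J) inj i (prj i x).
Proof.
move=> hnd hc; apply: dsum_ext => j; rewrite dsum_val_sum_dinj //.
by case: pselect => // h; rewrite hc.
Qed.

Lemma teq2_sumr (M W : lmodType k) (J : Type) (F : J -> M) (h : W) (s : seq J) :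
  teq2 [:: (\sum_(a <- s) F a, h)] [seq (F a, h) | a <- s].
Proof.
elim: s => [|a s IH]; first by rewrite big_nil; apply: t2_zero.
rewrite big_cons /=; apply: t2_trans (t2_addl _ _ _) _.
exact: (cong_catl (teq2_cong _ _) [:: _] IH).
Qed.

Lemma teq2_dsum_decomp (s : seq (DS * H)) (J : seq I) : List.NoDup J ->
  (forall x, List.In x s -> forall i, ~ List.In i J -> sval x.1 i = 0) ->
  teq2 s (flatten [seq tmap2 (inj i) id (tmap2 (prj i) id s) | i <- J]).
Proof.
have C := teq2_cong DS H.
move=> hnd; elim: s => [|[x h] s IH] hc /=.
  by apply: t2_sym; apply: (cong_flatten_nil C) => i _; apply: t2_refl.
apply: t2_trans _ (t2_sym (cong_flattenD C (fun i => [:: (inj i (prj i x), h)]) _ _)).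
rewrite -cat1s; apply: t2_cat; last by apply: IH => y hy; apply: hc; right.
rewrite flatten_map1; apply: t2_trans _ (teq2_sumr _ _ _).
rewrite -dsum_decomp //; first exact: t2_refl.
by move=> i hi; apply: (hc (x, h)) => //; left.
Qed.

Lemma teq2_dsum (s t : seq (DS * H)) :
  (forall j, teq2 (tmap2 (prj j) id s) (tmap2 (prj j) id t)) -> teq2 s t.
Proof.
move=> h; pose J := List.nodup (@Idec I) (flatten [seq supp_list x.1 | x <- s ++ t]).
have cov u : (forall x, List.In x u -> List.In x (s ++ t)) ->
    forall x, List.In x u -> forall i, ~ List.In i J -> sval x.1 i = 0.
  move=> hu x /hu hx i hi; apply: supp_listP => h'; apply/hi/List.nodup_In.
  elim: (s ++ t) hx => // y r IHr /= [->|hy]; apply: List.in_or_app; [by left | right].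
  exact: IHr.
have hnd : List.NoDup J by apply: List.NoDup_nodup.
apply: t2_trans (teq2_dsum_decomp hnd (cov s _)) _.
  by move=> x hx; apply: List.in_or_app; left.
apply: t2_trans _ (t2_sym (teq2_dsum_decomp hnd (cov t _))); last first.
  by move=> x hx; apply: List.in_or_app; right.
apply: (cong_flatten (teq2_cong _ _)) => i _.
exact/teq2_mapl/h/dinj_lin.
Qed.

Lemma dsum_co_dinj i (v : V i) : teq2 (dco (inj i v)) (tmap2 (inj i) id (rho v)).
Proof.
apply: teq2_dsum => j; apply: t2_trans (dsum_co_proj _ _) _.
case: (pselect (i = j)) => [<-|ne]; first by rewrite tmap2_dprojK dprojK; apply: t2_refl.
rewrite dproj_dinj_ne //; apply: t2_trans (tlinear0 (cm_lin (V j))) _.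
exact/t2_sym/teq2_dproj_dinj_ne.
Qed.

Lemma dsum_co_lin : tlinear dco.
Proof.
move=> c x y; apply: teq2_dsum => j; apply: t2_trans (dsum_co_proj _ _) _.
rewrite tmap2_cat tmap2_comp (@eq_tmap2 _ _ _ _ _ (( *:%R c) \o prj j)) // -tmap2_comp.
apply: t2_trans (cm_lin (V j) c _ _) _.
apply: t2_cat; last exact: t2_sym (dsum_co_proj _ _).
exact/teq2_scale/t2_sym/dsum_co_proj.
Qed.

Lemma dsum_co_counit (f : DS) : \sum_(p <- dco f) counit K p.2 *: p.1 = f.
Proof.
apply: dsum_ext => j; rewrite dsum_val_sum.
have -> : \sum_(p <- dco f) sval (counit K p.2 *: p.1) j =
          \sum_(p <- tmap2 (prj j) id (dco f)) counit K p.2 *: p.1.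
  by rewrite /tmap2 big_map.
by rewrite (big_counit_teq2 K (dsum_co_proj f j)) cm_counit.
Qed.

Lemma expandl_dinj i (s : seq (V i * H)) :
  teq3 (expandl dco (tmap2 (inj i) id s))
       [seq (inj i x.1.1, x.1.2, x.2) | x <- expandl (@cm_co _ _ K (V i)) s].
Proof. by rewrite expandl_mapl map_expandl; apply: eq_teq3_expandl => v; exact: dsum_co_dinj. Qed.

Lemma dsum_co_coassoc (f : DS) : teq3 (expandl dco (dco f)) (expandr (comul K) (dco f)).
Proof.
rewrite {1}/expandl /expandr /dsum_co !flatten_map_flatten -!map_comp.
apply: (cong_flatten (teq3_cong _ _ _)) => i _ /=.
apply: t3_trans (expandl_dinj _) _.
rewrite -[flatten _]/(expandr (comul K) (tmap2 (inj i) id (rho (prj i f)))) expandr_mapl.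
exact/teq3_mapl/cm_coassoc/dinj_lin.
Qed.

Lemma dsum_coaction : is_coaction K dco.
Proof. by split; [exact: dsum_co_lin | exact: dsum_co_coassoc | exact: dsum_co_counit]. Qed.

Lemma dproj_hom i : is_hom dco (@cm_co _ _ K (V i)) (prj i).
Proof. by split=> // v; exact: dsum_co_proj. Qed.

End DirectSumComodule.

(** * Subcomodules *)

Section Transport.
Variables (k : comNzRingType) (H : comAlgType k) (K : hopf H).
Hypothesis Hflat : flat_over H.
Variables (W : comod K) (P : lmodType k) (i : P -> W) (r : P -> seq (P * H)).
Hypotheses (i_lin : klinear i) (i_inj : injective i).
Hypothesis i_co : forall x, teq2 (cm_co (i x)) (tmap2 i id (r x)).

Lemma tlinear_transport : tlinear r.
Proof.
move=> c x y; apply: (Hflat i_lin i_inj).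
apply: t2_trans (t2_sym (i_co _)) _.
rewrite i_lin; apply: t2_trans (cm_lin W c (i x) (i y)) _.
rewrite tmap2_cat; apply: t2_cat (i_co _).
have -> : tmap2 i id (tmap2 ( *:%R c) id (r x)) = tmap2 ( *:%R c) id (tmap2 i id (r x)).
  by rewrite !tmap2_comp; apply: eq_tmap2 => z /=; rewrite (klinearZ _ i_lin).
exact/teq2_scale/i_co.
Qed.

Lemma coassoc_transport v : teq3 (expandl r (r v)) (expandr (comul K) (r v)).
Proof.
apply: (flat_teq3_inj Hflat i_lin i_inj); rewrite map_expandl -expandr_mapl.
apply: t3_trans (eq_teq3_expandl _ (fun x => t2_sym (i_co x))) _.
rewrite -expandl_mapl; apply: t3_trans (teq3_expandl (cm_lin W) (t2_sym (i_co v))) _.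
exact: t3_trans (cm_coassoc (i v)) (teq3_expandr (comul_lin K) (i_co v)).
Qed.

Lemma counit_transport v : \sum_(p <- r v) counit K p.2 *: p.1 = v.
Proof.
apply: i_inj; rewrite (klinear_sum _ _ i_lin).
have -> : \sum_(p <- r v) i (counit K p.2 *: p.1) =
          \sum_(p <- tmap2 i id (r v)) counit K p.2 *: p.1.
  by rewrite /tmap2 big_map; apply: eq_bigr => p _ /=; rewrite (klinearZ _ i_lin).
by rewrite -(big_counit_teq2 K (i_co v)) cm_counit.
Qed.

Lemma coaction_transport : is_coaction K r.
Proof. by split; [exact: tlinear_transport | exact: coassoc_transport | exact: counit_transport]. Qed.

End Transport.

Section Core.
Variables (k : comNzRingType) (H : comAlgType k) (K : hopf H).
Hypothesis Hflat : flat_over H.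
Variables (W : comod K) (N : submodule W).
Notation rho := (@cm_co _ _ K W).
Notation Nval := (@subm_val _ _ N).

Definition coacts_in (v : W) := exists t : seq (subm N * H), teq2 (rho v) (tmap2 Nval id t).

Definition coacts_sub : submodule W.
Proof.
refine (@Submodule _ W coacts_in _ _ _).
- by exists [::]; exact: (tlinear0 (cm_lin W)).
- move=> x y [t1 h1] [t2 h2]; exists (t1 ++ t2); rewrite tmap2_cat.
  exact: t2_trans (tlinearD (cm_lin W) _ _) (t2_cat h1 h2).
- move=> c x [t1 h1]; exists (tmap2 ( *:%R c) id t1).
  apply: t2_trans (tlinearZ (cm_lin W) _ _) _.
  have -> : tmap2 Nval id (tmap2 ( *:%R c) id t1) = tmap2 ( *:%R c) id (tmap2 Nval id t1).
    by rewrite !tmap2_comp.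
  exact: teq2_scale.
Defined.

Definition core : submodule W := submI N coacts_sub.
Notation Core := (subm core).
Notation Cval := (@subm_val _ _ core).

Definition core_to_sub (p : Core) : subm N := exist _ (Cval p) (proj1 (svalP p)).

Lemma core_to_sub_lin : klinear core_to_sub.
Proof. by move=> c x y; apply: subm_ext. Qed.

(* M = (W (x) H) / (N (x) H), and v |-> [rho(v)] : N -> M has kernel [core]. *)
Definition modN := mod_rel H (@klinear_subm_val _ _ N).
Definition coact_mod (n : subm N) : fquot modN := fclass modN (rho (Nval n)).

Lemma coact_mod_lin : klinear coact_mod.
Proof.
move=> c x y; rewrite /coact_mod -fclass_scale -fclass_cat; apply/fclass_eq.
exact/teq2_modW/(cm_lin W).
Qed.

Lemma coact_mod_ker n : coact_mod n = 0 -> exists p, core_to_sub p = n.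
Proof.
move=> /(fclass_eq modN _ [::]) /(teq2_mod_nil (@klinear_subm_val _ _ N)) ht.
by exists (exist _ (Nval n) (conj (svalP n) ht)); apply: subm_ext.
Qed.

Lemma tassoc_expandl_mod (t : seq (subm N * H)) :
  teq2 (tassoc modN (expandl rho (tmap2 Nval id t))) (tmap2 coact_mod id t).
Proof.
rewrite /tassoc /expandl map_flatten -!map_comp /tmap2 -[X in teq2 _ X]flatten_map1.
apply: (cong_flatten (teq2_cong _ _)) => p _ /=; rewrite -map_comp.
have -> : [seq (fclass modN [:: (q.1, q.2)], p.2) | q <- rho (Nval p.1)] =
          [seq (fclass modN [:: q], p.2) | q <- rho (Nval p.1)].
  by apply: eq_map => -[a b].
exact: teq2_fclass_split.
Qed.

Lemma tassoc_expandr_mod0 (t : seq (subm N * H)) :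
  teq2 (tassoc modN (expandr (comul K) (tmap2 Nval id t))) [::].
Proof.
rewrite /tassoc /expandr map_flatten /tmap2 -!map_comp.
apply: (cong_flatten_nil (teq2_cong _ _)) => p _ /=; rewrite -map_comp.
elim: (comul K p.2) => [|q s IH] /=; first exact: t2_refl.
have -> : fclass modN [:: (Nval p.1, q.1)] = 0.
  by apply/fclass_eq; exists [::], [:: (p.1, q.1)]; apply: t2_refl.
exact: (t2_cat (t2_zero _ _) IH).
Qed.

(* Coassociativity: if rho(v) = t \in N (x) H, then the image of t in M (x) H is 0. *)
Lemma coact_mod_tensor0 (t : seq (subm N * H)) (v : W) :
  teq2 (rho v) (tmap2 Nval id t) -> teq2 (tmap2 coact_mod id t) [::].
Proof.
move=> ht; apply: t2_trans (t2_sym (tassoc_expandl_mod t)) _.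
apply: t2_trans _ (tassoc_expandr_mod0 t); apply: teq2_tassoc.
apply: t3_trans (t3_sym (teq3_expandl (cm_lin W) ht)) _.
exact: t3_trans (cm_coassoc v) (teq3_expandr (comul_lin K) ht).
Qed.

(* By flatness t vanishes already in (image of coact_mod) (x) H, and right
   exactness of - (x) H along core -> N -> image lifts t to core (x) H. *)
Lemma core_coacts (x : Core) : exists t : seq (Core * H), teq2 (rho (Cval x)) (tmap2 Cval id t).
Proof.
have [_ [t ht]] := svalP x.
have h0 : teq2 (tmap2 (to_image coact_mod_lin) id t) [::].
  apply: (Hflat (@klinear_subm_val _ _ _) (@subm_val_inj _ _ _)).
  by rewrite tmap2_comp; exact: coact_mod_tensor0 ht.
have ker n : to_image coact_mod_lin n = 0 -> exists p, core_to_sub p = n.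
  by move=> /(congr1 (@subm_val _ _ _)); exact: coact_mod_ker.
have [t' ht'] := right_exact (to_image_lin coact_mod_lin) core_to_sub_lin
  (to_image_surj coact_mod_lin) ker h0.
exists t'; apply: t2_trans ht _.
rewrite -[tmap2 Cval _ _]/(tmap2 (Nval \o core_to_sub) id t') -tmap2_comp.
exact: teq2_mapl.
Qed.

Definition core_co (x : Core) : seq (Core * H) := sval (cid (core_coacts x)).

Lemma core_coP x : teq2 (rho (Cval x)) (tmap2 Cval id (core_co x)).
Proof. by rewrite /core_co; case: (cid _). Qed.

Lemma core_coaction : is_coaction K core_co.
Proof. exact: (coaction_transport Hflat (@klinear_subm_val _ _ _) (@subm_val_inj _ _ _) core_coP). Qed.

Definition core_comod : comod K := Comod core_coaction.

Lemma core_incl_hom : Khom (W := W) (V := core_comod) Cval.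
Proof. by split=> // q; exact/t2_sym/core_coP. Qed.

End Core.

(** * Local finiteness and the main theorem *)

Section LocallyFinite.
Variables (k : comNzRingType) (H : comAlgType k) (K : hopf H).
Hypotheses (hn : noetherian k) (Hflat : flat_over H).

Lemma core_span_fin_gen (W : comod K) (L : seq W) : fin_gen (core_comod Hflat (span L)).
Proof.
have [G [G_core G_gen]] :=
  noetherian_generates (S := core (span L)) hn (fun x hx => proj1 hx).
pose lift (v : W) : subm (core (span L)) :=
  if pselect (core (span L) v) is left h then exist _ v h else 0.
have liftK : map (@subm_val _ _ _) (map lift G) = G.
  rewrite -map_comp -[RHS]map_id; apply/eq_in_map => x /G_core hx /=.
  by rewrite /lift; case: pselect.
exists (map lift G) => m.
apply: (inspan_map_inj (@klinear_subm_val _ _ _) (@subm_val_inj _ _ _)).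
by rewrite liftK; apply/G_gen/(svalP m).
Qed.

Lemma core_coeff_span (W : comod K) (w : W) : core (span (map fst (cm_co w))) w.
Proof.
set L := map fst (cm_co w); split.
  rewrite -(cm_counit w) big_seq; apply: inspan_sum => p hp.
  by apply/inspanZ/inspan_mem/map_f.
pose lift (v : W) : subm (span L) :=
  if pselect (inspan L v) is left h then exist _ v h else 0.
exists [seq (lift p.1, p.2) | p <- cm_co w].
suff -> : tmap2 (@subm_val _ _ _) id [seq (lift p.1, p.2) | p <- cm_co w] = cm_co w.
  exact: t2_refl.
rewrite /tmap2 -map_comp -[RHS]map_id; apply/eq_in_map => -[a b] hp /=.
rewrite /lift; case: pselect => // [[]]; apply: inspan_mem.
by have := map_f fst hp.
Qed.

Lemma locally_finite (W : comod K) (w : W) :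
  exists (Q : comod K) (iq : Q -> W), [/\ fin_gen Q, Khom iq & exists q, iq q = w].
Proof.
exists (core_comod Hflat (span (map fst (cm_co w)))), (@subm_val _ _ _); split.
- exact: core_span_fin_gen.
- exact: core_incl_hom.
- by exists (exist _ w (core_coeff_span w)).
Qed.

Section Family.
Variables (I : Type) (V : I -> comod K).
Hypothesis hom_zero : forall Q : comod K, fin_gen Q ->
  exists s : seq I, forall i, ~ List.In i s -> Hom_zero Q (V i).

Lemma homs_finsupp (W : comod K) (f : forall i, W -> V i) :
  (forall i, Khom (f i)) -> forall w, finsupp (fun i => f i w).
Proof.
move=> hf w; have [Q [iq [Qfin iq_hom [q <-]]]] := locally_finite w.
have [s hs] := hom_zero Qfin; exists s => i /hs Hzero.
exact: (Hzero _ (is_hom_comp iq_hom (hf i)) q).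
Qed.

Lemma dsum_lift_hom (W : comod K) (f : forall i, W -> V i) (hf : forall i, Khom (f i)) :
  is_hom (@cm_co _ _ K W) (@dsum_co _ _ K I V)
    (fun w => exist _ (fun i => f i w) (homs_finsupp hf w)).
Proof.
split=> [c x y | v]; first by apply: dsum_ext => i /=; apply: (hf i).1.
apply: teq2_dsum => j; apply: t2_trans _ (t2_sym (dsum_co_proj _ _)).
by rewrite tmap2_comp; exact: (hf j).2.
Qed.

End Family.

End LocallyFinite.

Theorem lemma4p1p1 (k : comNzRingType) (H : comAlgType k) (K : hopf H)
  (I : Type) (V : I -> comod K) :
  noetherian k ->
  flat_over H ->
  (forall Q : comod K, fin_gen Q ->
     exists s : seq I, forall i, ~ List.In i s -> Hom_zero Q (V i)) ->
  is_Kproduct (dsum_co (V := V)) (fun i => @dproj k I (fun j => cm_car (V j)) i).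
Proof.
move=> hn Hflat hom_zero; split; [exact: dsum_coaction | exact: dproj_hom |].
move=> W f hf; exists (fun w => exist _ _ (homs_finsupp hn Hflat hom_zero hf w)).
split=> //; first exact: dsum_lift_hom.
by move=> g' _ e w; apply: dsum_ext => i; exact: e.
Qed.
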